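(* Let $G$ be a connected graph with $|V(G)|=(\Delta(G)+1)(\gamma(G)-1)+1\geq 4$. If $G$ is a vertex domination-critical graph, then $G$ is regular, and $G$ is both a hypo-efficient domination graph and a hypo-unique domination graph.
   Context: All graphs are finite, simple and undirected. For $v\in V(G)$, $N[v]$ is the closed neighborhood of $v$. A set $D\subseteq V(G)$ is dominating if every vertex of $G$ not in $D$ has a neighbor in $D$; $\gamma(G)$ is the minimum size of a dominating set, and a dominating set of size $\gamma(G)$ is a $\gamma$-set. A vertex $v$ is $\gamma$-critical if $\gamma(G-v)<\gamma(G)$; $G$ is a vertex domination-critical graph if every vertex is $\gamma$-critical. A set $D\subseteq V(H)$ is an efficient dominating set (EDS) of $H$ if $|N_H[v]\cap D|=1$ for every $v\in V(H)$. $G$ is a hypo-efficient domination graph if $G$ has no EDS but $G-v$ has at least one EDS for every $v\in V(G)$. $G$ is a hypo-unique domination graph if $G$ has at least two $\gamma$-sets but $G-v$ has exactly one $\gamma$-set for every $v\in V(G)$. $\Delta(G)$ is the maximum degree. *)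

(* Induced subgraphs are given by
   a vertex set S : {set T}; G - v is the induced subgraph on [set: T] :\ v. *)
From mathcomp Require Import all_boot all_order.
Set Implicit Arguments. Unset Strict Implicit. Unset Printing Implicit Defensive.

Section Graphs.
Variables (T : finType) (e : rel T).

Definition simple_graph : Prop := symmetric e /\ irreflexive e.

Definition connected_graph : Prop := forall u v : T, connect e u v.

Definition deg (v : T) : nat := #|[set u | e v u]|.
Definition Delta : nat := \max_(v : T) deg v.
Definition regular : Prop := forall u v : T, deg u = deg v.

Definition cnbhd (S : {set T}) (v : T) : {set T} :=
  [set u in S | (u == v) || e v u].

Definition dominating (S D : {set T}) : bool :=
  (D \subset S) && [forall v in S, (v \in D) || [exists u in D, e u v]].

Definition gamma (S : {set T}) : nat :=
  \big[minn/#|S|]_(D : {set T} | dominating S D) #|D|.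

Definition gamma_set (S D : {set T}) : bool :=
  dominating S D && (#|D| == gamma S).

Definition Gminus (v : T) : {set T} := [set: T] :\ v.

Definition vertex_domination_critical : Prop :=
  forall v : T, gamma (Gminus v) < gamma [set: T].

Definition efficient_dominating (S D : {set T}) : bool :=
  (D \subset S) && [forall v in S, #|cnbhd S v :&: D| == 1].

Definition has_EDS (S : {set T}) : Prop :=
  exists D : {set T}, efficient_dominating S D.

Definition hypo_efficient : Prop :=
  ~ has_EDS [set: T] /\ forall v : T, has_EDS (Gminus v).

Definition hypo_unique : Prop :=
  1 < #|[set D : {set T} | gamma_set [set: T] D]| /\
  forall v : T, #|[set D : {set T} | gamma_set (Gminus v) D]| = 1.

End Graphs.

(* Write n = (Delta + 1) k + 1 with k = gamma - 1.  Criticality forces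
   gamma (G - z) = k, so a gamma-set D of G - z satisfies
   |D| (Delta + 1) = n - 1.  Double counting
   sum_w |N[w] :&: D| = sum_(d in D) (deg d + 1) <= n - 1 then shows that D
   dominates every w <> z exactly once, misses N[z], and consists of vertices
   of degree Delta.  For two such sets P (of G - z) and Q (of G - z'),
   counting the edges between P :\: Q and Q :\: P gives z' \in P <-> z \in Q.
   Hence every vertex lies in the gamma-set of some G - d and has degree
   Delta, and the gamma-set of G - v is unique.  An EDS of G would give
   (Delta + 1) | n, and adding v or a neighbour of v to the gamma-set of G - v
   yields two gamma-sets of G. *)

From mathcomp Require Import all_boot all_order zify.
Set Implicit Arguments. Unset Strict Implicit. Unset Printing Implicit Defensive.

Lemma bigmin_le (I : eqType) (r : seq I) (P : pred I) (F : I -> nat) x j :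
  j \in r -> P j -> \big[minn/x]_(i <- r | P i) F i <= F j.
Proof.
elim: r => //= i r IHr; rewrite in_cons big_cons => /predU1P [<- -> | jr Pj].
  exact: geq_minl.
by case: (P i); rewrite ?geq_min IHr ?orbT.
Qed.

Section Domination.
Variables (T : finType) (e : rel T).

Lemma gamma_le_card (S D : {set T}) : dominating e S D -> gamma e S <= #|D|.
Proof. by move=> domD; apply: bigmin_le; rewrite ?mem_index_enum. Qed.

Lemma gamma_set_exists (S : {set T}) : exists D, gamma_set e S D.
Proof.
rewrite /gamma_set /gamma.
apply: (big_ind (fun m => exists D, dominating e S D && (#|D| == m))).
- by exists S; rewrite /dominating subxx eqxx andbT; apply/forall_inP=> v ->.
- by move=> m1 m2 [D1 /andP [? /eqP <-]] [D2 /andP [? /eqP <-]];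
    case: leqP => _; [exists D1 | exists D2]; apply/andP.
- by move=> D domD; exists D; rewrite domD eqxx.
Qed.

Lemma dominating_setU1_Gminus (sym_e : symmetric e) z x (D : {set T}) :
  x \in cnbhd e [set: T] z -> dominating e (Gminus z) D -> dominating e [set: T] (x |: D).
Proof.
rewrite !inE /= => xz /andP [_ /forall_inP domD]; rewrite /dominating subsetT /=.
apply/forall_inP=> w _; have [-> | wz] := eqVneq w z.
  case/orP: xz => [/eqP -> | ezx]; first by rewrite setU11.
  by apply/orP; right; apply/exists_inP; exists x; rewrite ?setU11 // sym_e.
have wS : w \in Gminus z by rewrite !inE wz.
have /orP [wD | /exists_inP [u uD euw]] := domD w wS.
- by rewrite inE wD orbT.
- by apply/orP; right; apply/exists_inP; exists u; rewrite // inE uD orbT.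
Qed.

Lemma gamma_setT_le (sym_e : symmetric e) z : gamma e [set: T] <= (gamma e (Gminus z)).+1.
Proof.
have [D /andP [domD /eqP <-]] := gamma_set_exists (Gminus z).
have zNz : z \in cnbhd e [set: T] z by rewrite !inE eqxx.
apply: leq_trans (gamma_le_card (dominating_setU1_Gminus sym_e zNz domD)) _.
by rewrite cardsU1; case: (z \notin D).
Qed.

End Domination.

Lemma sum_eq_of_leq (I : finType) (P : pred I) (F G : I -> nat) :
  (forall i, P i -> F i <= G i) -> \sum_(i | P i) G i <= \sum_(i | P i) F i ->
  forall i, P i -> F i = G i.
Proof.
move=> leFG leGF; have [leS eqS] := leqif_sum (fun i Pi => leqif_eq (leFG i Pi)).
have /forall_inP eqFG : [forall (i | P i), F i == G i] by rewrite -eqS eqn_leq leS.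
by move=> i /eqFG/eqP.
Qed.

Section EfficientOff.
Variables (T : finType) (e : rel T).
Hypotheses (sym_e : symmetric e) (irr_e : irreflexive e).

Local Notation "N[ v ]" := (cnbhd e [set: T] v) (format "N[ v ]").

Lemma cnbhdE (S : {set T}) v : cnbhd e S v = N[v] :&: S.
Proof. by apply/setP=> u; rewrite !inE andbC. Qed.

Lemma card_cnbhdT v : #|N[v]| = (deg e v).+1.
Proof.
have -> : N[v] = v |: [set u | e v u] by apply/setP=> u; rewrite !inE.
by rewrite cardsU1 inE irr_e.
Qed.

Lemma sum_card_cnbhdI (A B : {set T}) :
  \sum_(a in A) #|N[a] :&: B| = \sum_(b in B) #|N[b] :&: A|.
Proof.
have cardE (X Y : {set T}) : #|X :&: Y| = \sum_(y in Y) (y \in X).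
  rewrite -sum1_card [LHS]big_mkcond [RHS]big_mkcond /=.
  by apply: eq_bigr => y _; rewrite inE; case: (y \in X); case: (y \in Y).
under eq_bigr do rewrite cardE; rewrite exchange_big /=.
by apply: eq_bigr => b _; rewrite cardE; apply: eq_bigr => a _; rewrite !inE eq_sym sym_e.
Qed.

Lemma sum_card_cnbhdTI (D : {set T}) :
  \sum_w #|N[w] :&: D| = \sum_(d in D) (deg e d).+1.
Proof.
rewrite (eq_bigl (fun w => w \in [set: T])); last by move=> w; rewrite inE.
rewrite sum_card_cnbhdI; apply: eq_bigr => d _.
by rewrite setIT card_cnbhdT.
Qed.

Lemma sum_neq (A : {set T}) z : \sum_(a in A) (a != z) = #|A :\ z|.
Proof.
rewrite -sum1_card [LHS]big_mkcond [RHS]big_mkcond /=.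
by apply: eq_bigr => a _; rewrite !inE andbC; case: (a \in A); case: (a != z).
Qed.

Lemma sum_neqT (z : T) : \sum_w (w != z) = #|T|.-1.
Proof. by rewrite (bigD1 z) //= eqxx add0n -(cardC1 z) -sum1_card; apply: eq_bigr => w ->. Qed.

Lemma dominating_cnbhdI (S D : {set T}) w :
  dominating e S D -> w \in S -> 0 < #|N[w] :&: D|.
Proof.
case/andP=> _ /forall_inP domD /domD /orP [wD | /exists_inP [u uD euw]];
  rewrite card_gt0; apply/set0Pn.
- by exists w; rewrite !inE eqxx.
- by exists u; rewrite !inE sym_e euw orbT.
Qed.

(* D is an efficient dominating set of G - z none of whose vertices is
   adjacent to z. *)
Definition efficient_off (z : T) (D : {set T}) : bool :=
  [forall w, #|N[w] :&: D| == (w != z)].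

Lemma efficient_off_card z D w : efficient_off z D -> #|N[w] :&: D| = (w != z).
Proof. by move/forallP/(_ w)/eqP. Qed.

Lemma efficient_off_notin z D v : efficient_off z D -> v \in N[z] -> v \notin D.
Proof.
move/(efficient_off_card z); rewrite eqxx => /eqP; rewrite cards_eq0 => /eqP ND vNz.
apply/negP=> vD; have: v \in N[z] :&: D by rewrite inE vNz vD.
by rewrite ND inE.
Qed.

Lemma efficient_off_indep z D a b :
  efficient_off z D -> a \in D -> b \in D -> b \in N[a] -> b = a.
Proof.
move=> effD aD bD bNa; have az : a != z.
  by apply: contraTneq aD => ->; apply: efficient_off_notin effD _; rewrite !inE eqxx.
move: (efficient_off_card a effD); rewrite az => /eqP/cards1P [c Nc].
have: a \in N[a] :&: D by rewrite !inE eqxx.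
have: b \in N[a] :&: D by rewrite inE bNa.
by rewrite Nc !inE => /eqP -> /eqP ->.
Qed.

Lemma efficient_off_cnbhdI_setD z z' P Q a :
  efficient_off z P -> efficient_off z' Q -> a \in P :\: Q ->
  #|N[a] :&: (Q :\: P)| = (a != z').
Proof.
move=> effP effQ /setDP [aP aQ]; rewrite -(efficient_off_card a effQ).
suff -> : N[a] :&: (Q :\: P) = N[a] :&: Q by [].
apply/setP=> b; rewrite !inE /=; case bNa: (_ || _) => //=.
case bQ: (b \in Q); rewrite ?andbT ?andbF //.
apply: contraNN aQ => bP.
have bNa' : b \in N[a] by rewrite !inE.
by rewrite -(efficient_off_indep effP aP bP bNa').
Qed.

Lemma efficient_off_swap z z' P Q :
  efficient_off z P -> efficient_off z' Q -> #|P| = #|Q| -> (z' \in P) = (z \in Q).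
Proof.
move=> effP effQ cardPQ.
(* Count the edges between P :\: Q and Q :\: P from both sides. *)
have := sum_card_cnbhdI (P :\: Q) (Q :\: P).
rewrite (eq_bigr _ (fun a => efficient_off_cnbhdI_setD effP effQ)).
rewrite (eq_bigr _ (fun b => efficient_off_cnbhdI_setD effQ effP)) !sum_neq.
have : #|P :\: Q| = #|Q :\: P| by rewrite !cardsD setIC cardPQ.
rewrite (cardsD1 z' (P :\: Q)) (cardsD1 z (Q :\: P)) !inE.
have zP : z \notin P by apply: efficient_off_notin effP _; rewrite !inE eqxx.
have z'Q : z' \notin Q by apply: efficient_off_notin effQ _; rewrite !inE eqxx.
rewrite (negbTE zP) (negbTE z'Q) /=.
by case: (z' \in P) (z \in Q) => [] [] //=; lia.
Qed.

Lemma efficient_off_Gminus z (D : {set T}) :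
  efficient_off z D -> efficient_dominating e (Gminus z) D.
Proof.
move=> effD; have DS : D \subset Gminus z.
  apply/subsetP=> d dD; rewrite !inE andbT; apply: contraTneq dD => ->.
  by apply: efficient_off_notin effD _; rewrite !inE eqxx.
rewrite /efficient_dominating DS; apply/forall_inP=> w; rewrite !inE andbT => wz.
by rewrite cnbhdE -setIA (setIidPr DS) (efficient_off_card w effD) wz.
Qed.

Lemma dominating_Gminus_efficient_off z (D : {set T}) :
  #|D| * (Delta e).+1 <= #|T|.-1 -> dominating e (Gminus z) D -> efficient_off z D.
Proof.
move=> cardD domD.
have le_w w : true -> (w != z) <= #|N[w] :&: D|.
  move=> _; have [// | wz] := eqVneq w z.
  by apply: dominating_cnbhdI domD _; rewrite !inE wz.
have le_sum : \sum_w #|N[w] :&: D| <= \sum_w (w != z).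
  rewrite sum_card_cnbhdTI sum_neqT; apply: leq_trans cardD.
  by rewrite -sum_nat_const leq_sum // => d _; rewrite ltnS leq_bigmax.
apply/forallP=> w; rewrite eq_sym; apply/eqP; exact: sum_eq_of_leq le_w le_sum w _.
Qed.

Lemma efficient_off_deg z (D : {set T}) d :
  efficient_off z D -> #|D| * (Delta e).+1 = #|T|.-1 -> d \in D -> deg e d = Delta e.
Proof.
move=> effD cardD dD; apply/succn_inj; move: d dD.
apply: sum_eq_of_leq => [d _ | ]; first by rewrite ltnS leq_bigmax.
rewrite sum_nat_const cardD -(sum_neqT z) -sum_card_cnbhdTI.
by apply/eq_leq/eq_bigr=> w _; rewrite (efficient_off_card _ effD).
Qed.

End EfficientOff.

Section ExtremalCritical.
Variables (T : finType) (e : rel T) (k : nat).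
Hypotheses (sym_e : symmetric e) (irr_e : irreflexive e).
Hypotheses (gammaT : gamma e [set: T] = k.+1) (cardT : #|T| = (Delta e).+1 * k + 1).
Hypotheses (k_gt0 : 0 < k) (crit : vertex_domination_critical e).

Let cardT_pred : #|T|.-1 = k * (Delta e).+1.
Proof. by rewrite cardT addn1 mulnC. Qed.

Lemma gamma_Gminus z : gamma e (Gminus z) = k.
Proof. by have := crit z; have := gamma_setT_le sym_e z; rewrite gammaT; lia. Qed.

Lemma gamma_set_Gminus_card z D : gamma_set e (Gminus z) D -> #|D| = k.
Proof. by case/andP=> _ /eqP ->; rewrite gamma_Gminus. Qed.

Lemma gamma_set_Gminus_efficient_off z D :
  gamma_set e (Gminus z) D -> efficient_off e z D.
Proof.
move=> gD; case/andP: (gD) => domD _.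
apply: (dominating_Gminus_efficient_off sym_e irr_e) domD.
by rewrite (gamma_set_Gminus_card gD) cardT_pred.
Qed.

Lemma gamma_set_Gminus_swap z z' P Q :
  gamma_set e (Gminus z) P -> gamma_set e (Gminus z') Q -> (z' \in P) = (z \in Q).
Proof.
move=> gP gQ; apply: (efficient_off_swap sym_e).
- exact: gamma_set_Gminus_efficient_off gP.
- exact: gamma_set_Gminus_efficient_off gQ.
by rewrite (gamma_set_Gminus_card gP) (gamma_set_Gminus_card gQ).
Qed.

Lemma deg_Delta v : deg e v = Delta e.
Proof.
have [D gD] := gamma_set_exists e (Gminus v).
have /card_gt0P [d dD] : 0 < #|D| by rewrite (gamma_set_Gminus_card gD).
have [C gC] := gamma_set_exists e (Gminus d).
have vC : v \in C by rewrite -(gamma_set_Gminus_swap gD gC).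
apply: (efficient_off_deg sym_e irr_e (gamma_set_Gminus_efficient_off gC)) vC.
by rewrite (gamma_set_Gminus_card gC) cardT_pred.
Qed.

Lemma gamma_set_Gminus_eq v A B :
  gamma_set e (Gminus v) A -> gamma_set e (Gminus v) B -> A = B.
Proof.
move=> gA gB; apply/setP=> d; have [C gC] := gamma_set_exists e (Gminus d).
by rewrite (gamma_set_Gminus_swap gA gC) (gamma_set_Gminus_swap gB gC).
Qed.

Lemma no_EDS (Delta_gt0 : 0 < Delta e) : ~ has_EDS e [set: T].
Proof.
(* An EDS splits V into closed neighbourhoods of size Delta + 1. *)
case=> D /andP [_ /forall_inP effD]; have := sum_card_cnbhdTI sym_e irr_e D.
under eq_bigr do rewrite (eqP (effD _ (in_setT _))).
under [RHS]eq_bigr do rewrite deg_Delta //.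
rewrite sum1_card sum_nat_const cardT => /(congr1 (modn^~ (Delta e).+1)).
by rewrite [_ * k]mulnC modnMDl modnMl modn_small ?ltnS.
Qed.

Lemma gamma_set_Gminus_unique v : #|[set D | gamma_set e (Gminus v) D]| = 1.
Proof.
have [D gD] := gamma_set_exists e (Gminus v).
apply/eqP/cards1P; exists D; apply/setP=> A; rewrite !inE.
by apply/idP/eqP=> [gA | ->]; first exact: gamma_set_Gminus_eq gA gD.
Qed.

Lemma two_gamma_sets v y : e v y -> 1 < #|[set D | gamma_set e [set: T] D]|.
Proof.
move=> evy; have [D gD] := gamma_set_exists e (Gminus v).
have gammaU x : x \in cnbhd e [set: T] v -> gamma_set e [set: T] (x |: D).
  move=> xNv; case/andP: (gD) => domD _.
  rewrite /gamma_set (dominating_setU1_Gminus sym_e xNv domD) cardsU1.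
  rewrite (efficient_off_notin (gamma_set_Gminus_efficient_off gD) xNv).
  by rewrite (gamma_set_Gminus_card gD) gammaT /= add1n.
have vNv : v \in cnbhd e [set: T] v by rewrite !inE eqxx.
have yNv : y \in cnbhd e [set: T] v by rewrite !inE evy orbT.
have vD := efficient_off_notin (gamma_set_Gminus_efficient_off gD) vNv.
have neqD : v |: D != y |: D.
  apply/negP=> /eqP/setP/(_ v); rewrite !inE eqxx (negbTE vD) /= orbF => /esym/eqP vy.
  by move: evy; rewrite vy irr_e.
have sub : [set v |: D; y |: D] \subset [set D | gamma_set e [set: T] D].
  by apply/subsetP=> X; rewrite !inE => /orP [] /eqP ->; apply: gammaU.
by have := subset_leq_card sub; rewrite cards2 neqD.
Qed.

End ExtremalCritical.

Lemma connected_exists_edge (T : finType) (e : rel T) :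
  connected_graph e -> 1 < #|T| -> exists u v, e u v.
Proof.
move=> conn /card_gt1P [u [v [_ _ uv]]].
have /connectP [[| w p] /= pth lst] := conn u v; first by rewrite lst eqxx in uv.
by exists u, w; case/andP: pth.
Qed.

Theorem theorem3p18 (T : finType) (e : rel T) :
  simple_graph e ->
  connected_graph e ->
  #|T| = (Delta e + 1) * (gamma e [set: T] - 1) + 1 ->
  4 <= #|T| ->
  vertex_domination_critical e ->
  regular e /\ hypo_efficient e /\ hypo_unique e.
Proof.
move=> [sym_e irr_e] conn cardT cardT_ge4 crit.
set k := gamma e [set: T] - 1 in cardT; rewrite [Delta e + 1]addn1 in cardT.
have k_gt0 : 0 < k by move: cardT_ge4; rewrite cardT; case: (k) => //; rewrite muln0.
have gammaT : gamma e [set: T] = k.+1 by rewrite /k; lia.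
have [u [v euv]] := connected_exists_edge conn (ltnW (ltnW cardT_ge4)).
have Delta_gt0 : 0 < Delta e.
  by apply: leq_trans (leq_bigmax u); rewrite card_gt0; apply/set0Pn; exists v; rewrite inE.
split; [|split; split].
- by move=> x y; rewrite !(deg_Delta sym_e irr_e gammaT cardT k_gt0 crit).
- exact: (no_EDS sym_e irr_e gammaT cardT k_gt0 crit).
- move=> z; have [D gD] := gamma_set_exists e (Gminus z); exists D.
  exact/efficient_off_Gminus/(gamma_set_Gminus_efficient_off sym_e irr_e gammaT cardT k_gt0 crit gD).
- exact: (two_gamma_sets sym_e irr_e gammaT cardT k_gt0 crit euv).
- exact: (gamma_set_Gminus_unique sym_e irr_e gammaT cardT k_gt0 crit).
Qed.
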